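(* Assume $\rho<1$ and that the limits $f_j(z)=\lim_{n\to\infty}\mathbb E[z^{X_n}1_{\{J_{n+1}=j\}}]$, $|z|\le1$, exist (so $f_j(0)=\lim_n\mathbb P(X_n=0,J_{n+1}=j)$ and $f_j(1)=\pi_j$). Then for $|z|\le 1$ and $j=1,\dots,N$, $$(z-A_{jj}(z))f_j(z)-\sum_{i\neq j}A_{ij}(z)f_i(z)=(B(z)-1)\sum_{i=1}^N A_{ij}(z)f_i(0),$$ i.e. $M(z)^T f(z)=(B(z)-1)A(z)^Tf(0)$ with $f(z)=(f_1(z),\dots,f_N(z))^T$. Moreover, if $\mathbb E[B]<\infty$, then $$\sum_{i=1}^N f_i(0)=\frac{1-\rho}{\mathbb E[B]}.$$
   Context: Let $N\ge 2$. For $i,j\in\{1,\dots,N\}$ let $A_{ij}(z)=\sum_{k\ge 0}a_{ij}(k)z^k$ with $a_{ij}(k)\ge0$, $P_{ij}=A_{ij}(1)$, $\alpha_{ij}=A'_{ij}(1)<\infty$; $P=(P_{ij})$ is stochastic and irreducible with stationary distribution $\pi$, and $\rho=\sum_{i,j}\pi_i\alpha_{ij}$. $A(z)=(A_{ij}(z))$ and $M(z)=zI-A(z)$. Let $(A_n,J_{n+1})_{n\ge1}$ be random variables with $A_n\in\{0,1,\dots\}$, $J_n\in\{1,\dots,N\}$, such that conditionally on $J_n=i$ and on all earlier variables and all $B_m$, $\mathbb P(A_n=k,J_{n+1}=j)=a_{ij}(k)$. Let $(B_n)$ be i.i.d. positive-integer-valued with generating function $B(z)$ and mean $\mathbb E[B]$,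 independent of everything else. Let $X_0$ be a nonnegative integer and $X_n=X_{n-1}-1+A_n$ if $X_{n-1}\ge1$, $X_n=A_n+B_n-1$ if $X_{n-1}=0$. *)

From Stdlib Require Import Reals Lra Lia ClassicalEpsilon.
Open Scope R_scope.

Record Cplx : Type := mkC { Cre : R ; Cim : R }.
Definition RtoC (x : R) : Cplx := mkC x 0.
Definition Czero : Cplx := RtoC 0.
Definition Cone : Cplx := RtoC 1.
Definition Cadd (u v : Cplx) : Cplx := mkC (Cre u + Cre v) (Cim u + Cim v).
Definition Copp (u : Cplx) : Cplx := mkC (- Cre u) (- Cim u).
Definition Csub (u v : Cplx) : Cplx := Cadd u (Copp v).
Definition Cmul (u v : Cplx) : Cplx :=
  mkC (Cre u * Cre v - Cim u * Cim v) (Cre u * Cim v + Cim u * Cre v).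
Fixpoint Cpow (z : Cplx) (n : nat) : Cplx :=
  match n with O => Cone | S m => Cmul z (Cpow z m) end.
Definition Cnorm (z : Cplx) : R := sqrt (Cre z * Cre z + Cim z * Cim z).

Fixpoint fsum (n : nat) (f : nat -> R) : R :=
  match n with O => 0 | S m => fsum m f + f m end.
Fixpoint Cfsum (n : nat) (f : nat -> Cplx) : Cplx :=
  match n with O => Czero | S m => Cadd (Cfsum m f) (f m) end.

Definition Ccv (u : nat -> Cplx) (l : Cplx) : Prop :=
  Un_cv (fun n => Cre (u n)) (Cre l) /\ Un_cv (fun n => Cim (u n)) (Cim l).
Definition Cseries_cv (u : nat -> Cplx) (s : Cplx) : Prop :=
  Ccv (fun n => Cfsum (S n) u) s.

(* sums of convergent series (chosen by epsilon; meaningful when convergent) *)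
Definition rsum (u : nat -> R) : R :=
  epsilon (inhabits 0) (fun l => infinite_sum u l).
Definition Csum (u : nat -> Cplx) : Cplx :=
  epsilon (inhabits Czero) (fun s => Cseries_cv u s).

Definition gf (c : nat -> R) (z : Cplx) : Cplx :=
  Csum (fun k => Cmul (RtoC (c k)) (Cpow z k)).

Fixpoint matpow (N : nat) (P : nat -> nat -> R) (n : nat) : nat -> nat -> R :=
  match n with
  | O => fun i j => if Nat.eqb i j then 1 else 0
  | S m => fun i j => fsum N (fun l => matpow N P m i l * P l j)
  end.

Definition irreducible (N : nat) (P : nat -> nat -> R) : Prop :=
  forall i j, (i < N)%nat -> (j < N)%nat -> exists n, matpow N P n i j > 0.

(* ---------- law of the Markov chain (X_n, J_{n+1}) ----------
   a i j k = a_{ij}(k), b k = P(B = k), x0 = X_0, q j = P(J_1 = j).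
   law N a b x0 q n y j = P(X_n = y, J_{n+1} = j). *)
Fixpoint law (N : nat) (a : nat -> nat -> nat -> R) (b : nat -> R)
  (x0 : nat) (q : nat -> R) (n : nat) : nat -> nat -> R :=
  match n with
  | O => fun y j => if Nat.eqb y x0 then q j else 0
  | S m => fun y j =>
      fsum N (fun i =>
        (* X_{m} = x >= 1 :  X_{m+1} = x - 1 + A, x ranges over 1..y+1 *)
        fsum (S y) (fun t => law N a b x0 q m (S t) i * a i j (y - t)%nat)
        (* X_{m} = 0 :  X_{m+1} = A + B - 1, B = c+1 with c = 0..y *)
        + law N a b x0 q m 0 i *
            fsum (S y) (fun c => a i j (y - c)%nat * b (S c)))
  end.

(* The first identity is the one-step recursion
     z F_(n+1)(z) = A(z)^T F_n(z) + (B(z) - 1) A(z)^T F_n(0)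
   for the generating functions F_n of (X_n, J_(n+1)), passed to the limit.
   For the second, restrict to real x in [0, 1].  At x = 1 the recursion makes f(1) invariant
   for P, so f(1) = pi.  The left limits m_i = f_i(1-) form another invariant vector below pi,
   hence m = M pi with M <= 1; summing the identity over phases, dividing by 1 - x and letting
   x tend to 1 (Abel) gives M (1 - rho) = E[B] sum_i f_i(0).  Mass could still escape to
   infinity (M < 1); this is excluded by the drift bound: telescoping the recursion keeps the
   accumulated drift of X_n above -X_0, so by Cesaro its limit -1 + rho + E[B] sum_i f_i(0) is
   nonnegative.  With rho < 1 this forces M = 1. *)

From Pilot Require Import Defs.
From Coquelicot Require Import Coquelicot.
From Stdlib Require Import Reals Lra Lia ZArith ClassicalEpsilon FunctionalExtensionality.
(* Coquelicot's complex numbers shadow [Cplx]'s operations [Copp], [Cmul], ... *)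
Import Pilot.Defs.
Open Scope R_scope.

Lemma fsum_ext N f g : (forall i, (i < N)%nat -> f i = g i) -> fsum N f = fsum N g.
Proof. induction N; simpl; intros H; auto. rewrite IHN, H; auto. Qed.

Lemma fsum_const0 N : fsum N (fun _ => 0) = 0.
Proof. induction N; simpl; [|rewrite IHN]; ring. Qed.

Lemma fsum_plus N f g : fsum N (fun i => f i + g i) = fsum N f + fsum N g.
Proof. induction N; simpl; [|rewrite IHN]; ring. Qed.

Lemma fsum_minus N f g : fsum N (fun i => f i - g i) = fsum N f - fsum N g.
Proof. induction N; simpl; [|rewrite IHN]; ring. Qed.

Lemma fsum_scal_l N c f : fsum N (fun i => c * f i) = c * fsum N f.
Proof. induction N; simpl; [|rewrite IHN]; ring. Qed.

Lemma fsum_scal_r N c f : fsum N (fun i => f i * c) = fsum N f * c.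
Proof. induction N; simpl; [|rewrite IHN]; ring. Qed.

Lemma fsum_swap N M g :
  fsum N (fun i => fsum M (fun j => g i j)) = fsum M (fun j => fsum N (fun i => g i j)).
Proof.
  induction N; simpl.
  - now rewrite fsum_const0.
  - now rewrite IHN, <- fsum_plus.
Qed.

Lemma fsum_nonneg N f : (forall i, (i < N)%nat -> 0 <= f i) -> 0 <= fsum N f.
Proof.
  induction N; simpl; intros H; [lra|].
  assert (0 <= f N) by (apply H; lia).
  assert (0 <= fsum N f) by (apply IHN; intros; apply H; lia). lra.
Qed.

Lemma fsum_le N f g : (forall i, (i < N)%nat -> f i <= g i) -> fsum N f <= fsum N g.
Proof.
  intros H. rewrite <- (Rplus_0_r (fsum N f)), <- (Rplus_0_l (fsum N g)).
  enough (0 <= fsum N g - fsum N f) by lra.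
  rewrite <- fsum_minus. apply fsum_nonneg. intros i Hi. specialize (H i Hi). lra.
Qed.

Lemma fsum_sum_f_R0 n f : fsum (S n) f = sum_f_R0 f n.
Proof. induction n; simpl in *; [ring | now rewrite <- IHn]. Qed.

Lemma fsum_ge_term N f i :
  (forall i, (i < N)%nat -> 0 <= f i) -> (i < N)%nat -> f i <= fsum N f.
Proof.
  induction N; simpl; intros H Hi; [lia|].
  assert (0 <= f N) by (apply H; lia).
  destruct (Nat.eq_dec i N) as [->|].
  - assert (0 <= fsum N f) by (apply fsum_nonneg; intros; apply H; lia). lra.
  - assert (f i <= fsum N f) by (apply IHN; [intros; apply H; lia | lia]). lra.
Qed.

Lemma fsum_nonneg_eq0 N f : (forall i, (i < N)%nat -> 0 <= f i) -> fsum N f = 0 ->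
  forall i, (i < N)%nat -> f i = 0.
Proof.
  intros H E i Hi. pose proof (fsum_ge_term N f i H Hi). pose proof (H i Hi). lra.
Qed.

Lemma fsum_delta N f j :
  (j < N)%nat -> fsum N (fun i => if Nat.eqb i j then f i else 0) = f j.
Proof.
  induction N; simpl; intros H; [lia|].
  destruct (Nat.eq_dec j N) as [->|].
  - rewrite Nat.eqb_refl, (fsum_ext N _ (fun _ => 0)), fsum_const0; [ring|].
    intros i Hi. destruct (Nat.eqb_spec i N); [lia | auto].
  - destruct (Nat.eqb_spec N j); [lia|]. rewrite IHN by lia. ring.
Qed.

Lemma fsum_telescope n u : fsum n (fun m => u (S m) - u m) = u n - u O.
Proof. induction n; simpl; [|rewrite IHn]; ring. Qed.

Lemma infinite_sum_ext a b l :
  (forall n, a n = b n) -> infinite_sum a l -> infinite_sum b l.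
Proof.
  intros E H eps He. destruct (H eps He) as [M HM]. exists M. intros n Hn.
  rewrite <- (sum_eq a b n) by auto. now apply HM.
Qed.

Lemma infinite_sum_plus a b la lb : infinite_sum a la -> infinite_sum b lb ->
  infinite_sum (fun n => a n + b n) (la + lb).
Proof.
  intros Ha Hb. apply is_series_Reals, (is_series_plus a b la lb); now apply is_series_Reals.
Qed.

Lemma infinite_sum_scal c a la :
  infinite_sum a la -> infinite_sum (fun n => c * a n) (c * la).
Proof. intros Ha. apply is_series_Reals, (is_series_scal c a la). now apply is_series_Reals. Qed.

Lemma infinite_sum_minus a b la lb : infinite_sum a la -> infinite_sum b lb ->
  infinite_sum (fun n => a n - b n) (la - lb).
Proof.
  intros Ha Hb. apply infinite_sum_plus; [exact Ha|].
  apply infinite_sum_ext with (fun n => -1 * b n); [intros; ring|].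
  replace (- lb) with (-1 * lb) by ring. now apply infinite_sum_scal.
Qed.

Lemma infinite_sum_le a b la lb :
  (forall n, a n <= b n) -> infinite_sum a la -> infinite_sum b lb -> la <= lb.
Proof.
  intros H Ha Hb. eapply Rle_cv_lim; [|exact Ha|exact Hb].
  intros n. apply sum_Rle. intros; apply H.
Qed.

Lemma infinite_sum_0 : infinite_sum (fun _ => 0) 0.
Proof.
  intros eps He. exists O. intros n _. unfold R_dist.
  rewrite <- fsum_sum_f_R0, fsum_const0, Rminus_0_r, Rabs_R0. exact He.
Qed.

Lemma rsum_eq a l : infinite_sum a l -> rsum a = l.
Proof.
  intros H. apply (uniqueness_sum a); [|exact H].
  unfold rsum. apply epsilon_spec. now exists l.
Qed.

Lemma infinite_sum_unshift a l :
  infinite_sum (fun k => a (S k)) l -> infinite_sum a (l + a O).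
Proof.
  intros H. apply is_series_Reals, is_series_decr_1.
  change (plus (l + a O) (opp (a O))) with (l + a O - a O).
  replace (l + a O - a O) with l by ring. now apply is_series_Reals.
Qed.

Lemma infinite_sum_shift a l :
  infinite_sum a l -> infinite_sum (fun k => a (S k)) (l - a O).
Proof.
  intros H. apply is_series_Reals, is_series_incr_1.
  change (plus (l - a O) (a O)) with (l - a O + a O).
  replace (l - a O + a O) with l by ring. now apply is_series_Reals.
Qed.

Lemma infinite_sum_comparison u c sc :
  (forall n, Rabs (u n) <= c n) -> infinite_sum c sc -> exists s, infinite_sum u s.
Proof.
  intros H Hc. destruct (ex_series_le u c) as [s Hs]; [exact H | exists sc; now apply is_series_Reals|].
  exists s. now apply is_series_Reals.
Qed.

Lemma infinite_sum_head a : (forall k, a (S k) = 0) -> infinite_sum a (a O).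
Proof.
  intros H. replace (a O) with (0 + a O) by ring. apply infinite_sum_unshift.
  apply infinite_sum_ext with (fun _ => 0); [intros; now rewrite H | apply infinite_sum_0].
Qed.

Lemma infinite_sum_indicator m c :
  infinite_sum (fun k => if Nat.eqb k m then c else 0) c.
Proof.
  induction m.
  - apply (infinite_sum_head (fun k => if Nat.eqb k 0 then c else 0)). reflexivity.
  - pose proof (infinite_sum_unshift (fun k => if Nat.eqb k (S m) then c else 0) c IHm) as H.
    simpl in H. now rewrite Rplus_0_r in H.
Qed.

Lemma infinite_sum_fsum N u l : (forall i, (i < N)%nat -> infinite_sum (u i) (l i)) ->
  infinite_sum (fun k => fsum N (fun i => u i k)) (fsum N l).
Proof.
  induction N; simpl; intros H; [apply infinite_sum_0|].
  apply infinite_sum_plus; [apply IHN; intros; apply H; lia | apply H; lia].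
Qed.

Lemma infinite_sum_ge_partial u U n :
  (forall k, 0 <= u k) -> infinite_sum u U -> sum_f_R0 u n <= U.
Proof.
  intros Hn HU.
  apply (@Rle_cv_lim (fun _ => sum_f_R0 u n) (fun m => sum_f_R0 u (n + m))).
  - intros m. induction m; [rewrite Nat.add_0_r; lra|].
    rewrite Nat.add_succ_r. simpl. specialize (Hn (S (n + m))). lra.
  - intros e He. exists O. intros. unfold R_dist. rewrite Rminus_diag, Rabs_R0. exact He.
  - intros e He. destruct (HU e He) as [M HM]. exists M. intros; apply HM; lia.
Qed.

Definition summable (c : nat -> R) : Prop := exists s, infinite_sum c s.
Definition nonneg (c : nat -> R) : Prop := forall k, 0 <= c k.

Lemma summable_ext c d : (forall k, c k = d k) -> summable c -> summable d.
Proof. intros E [s H]. exists s. eapply infinite_sum_ext; eauto. Qed.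

Lemma summable_plus c d : summable c -> summable d -> summable (fun k => c k + d k).
Proof. intros [s H] [t H']. exists (s + t). now apply infinite_sum_plus. Qed.

Lemma summable_scal l c : summable c -> summable (fun k => l * c k).
Proof. intros [s H]. exists (l * s). now apply infinite_sum_scal. Qed.

Lemma summable_shift c : summable c -> summable (fun k => c (S k)).
Proof. intros [s H]. eexists. apply infinite_sum_shift; eauto. Qed.

Lemma summable_fsum N u : (forall i, (i < N)%nat -> summable (u i)) ->
  summable (fun k => fsum N (fun i => u i k)).
Proof.
  induction N; simpl; intros H; [exists 0; apply infinite_sum_0|].
  apply summable_plus; [apply IHN; intros; apply H; lia | apply H; lia].
Qed.

Lemma cv_const c : Un_cv (fun _ => c) c.
Proof. intros e He. exists O. intros. unfold R_dist. rewrite Rminus_diag, Rabs_R0. exact He. Qed.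

Lemma cv_scal c u l : Un_cv u l -> Un_cv (fun n => c * u n) (c * l).
Proof. intros H. apply CV_mult; [apply cv_const | exact H]. Qed.

Lemma cv_pow u l y : Un_cv u l -> Un_cv (fun k => u k ^ y) (l ^ y).
Proof. intros H. induction y; simpl; [apply cv_const | now apply CV_mult]. Qed.

Lemma cv_fsum N u l : (forall i, (i < N)%nat -> Un_cv (u i) (l i)) ->
  Un_cv (fun n => fsum N (fun i => u i n)) (fsum N l).
Proof.
  induction N; simpl; intros H; [apply cv_const|].
  apply CV_plus; [apply IHN; intros; apply H; lia | apply H; lia].
Qed.

Lemma cv_S u l : Un_cv u l -> Un_cv (fun n => u (S n)) l.
Proof. intros H e He. destruct (H e He) as [M HM]. exists M. intros; apply HM; lia. Qed.

Lemma cv_ext u v l : (forall n, u n = v n) -> Un_cv u l -> Un_cv v l.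
Proof.
  intros E H e He. destruct (H e He) as [M HM]. exists M. intros; rewrite <- E; now apply HM.
Qed.

Lemma cv_inv_INR_S : Un_cv (fun k => / (INR k + 1)) 0.
Proof.
  intros e He. destruct (archimed (/ e)) as [H1 _].
  assert (0 <= IZR (up (/ e))) by (pose proof (Rinv_0_lt_compat e He); lra).
  exists (Z.to_nat (up (/ e))). intros n Hn. unfold R_dist. rewrite Rminus_0_r.
  pose proof (pos_INR n). rewrite Rabs_pos_eq by (apply Rlt_le, Rinv_0_lt_compat; lra).
  assert (IZR (up (/ e)) <= INR n).
  { rewrite <- (Z2Nat.id (up (/ e))), <- INR_IZR_INZ by (apply le_IZR; lra).
    apply le_INR. lia. }
  apply Rlt_le_trans with (/ (/ e)); [|rewrite Rinv_inv; lra].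
  apply Rinv_lt_contravar; [|lra].
  apply Rmult_lt_0_compat; [apply Rinv_0_lt_compat|]; lra.
Qed.

Lemma Cext u v : Cre u = Cre v -> Cim u = Cim v -> u = v.
Proof. destruct u, v; simpl; intros; subst; auto. Qed.

Lemma Cring : ring_theory Czero Cone Cadd Cmul Csub Copp (@eq Cplx).
Proof. constructor; intros; apply Cext; simpl; ring. Qed.
Add Ring Cring : Cring.

Lemma Cfsum_re n u : Cre (Cfsum n u) = fsum n (fun i => Cre (u i)).
Proof. induction n; simpl; [|rewrite IHn]; auto. Qed.

Lemma Cfsum_im n u : Cim (Cfsum n u) = fsum n (fun i => Cim (u i)).
Proof. induction n; simpl; [|rewrite IHn]; auto. Qed.

Lemma Cfsum_ext N u v : (forall i, (i < N)%nat -> u i = v i) -> Cfsum N u = Cfsum N v.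
Proof. induction N; simpl; intros H; auto. rewrite IHN, H; auto. Qed.

Lemma Cfsum_add N u v :
  Cfsum N (fun i => Cadd (u i) (v i)) = Cadd (Cfsum N u) (Cfsum N v).
Proof. induction N; simpl; [|rewrite IHN]; ring. Qed.

Lemma Cfsum_mul_l N w u : Cfsum N (fun i => Cmul w (u i)) = Cmul w (Cfsum N u).
Proof. induction N; simpl; [|rewrite IHN]; ring. Qed.

Lemma Cfsum_skip N u j : (j < N)%nat ->
  Cfsum N (fun i => if Nat.eqb i j then Czero else u i) = Csub (Cfsum N u) (u j).
Proof.
  induction N; simpl; intros H; [lia|].
  destruct (Nat.eq_dec j N) as [->|].
  - rewrite Nat.eqb_refl, (Cfsum_ext N _ u); [ring|].
    intros i Hi. destruct (Nat.eqb_spec i N); [lia | auto].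
  - destruct (Nat.eqb_spec N j); [lia|]. rewrite IHN by lia. ring.
Qed.

Lemma RtoC_add u v : Cadd (RtoC u) (RtoC v) = RtoC (u + v).
Proof. apply Cext; simpl; ring. Qed.

Lemma RtoC_mul u v : Cmul (RtoC u) (RtoC v) = RtoC (u * v).
Proof. apply Cext; simpl; ring. Qed.

Lemma RtoC_sub_one u : Csub (RtoC u) Cone = RtoC (u - 1).
Proof. apply Cext; simpl; ring. Qed.

Lemma RtoC_inj u v : RtoC u = RtoC v -> u = v.
Proof. intros H. exact (f_equal Cre H). Qed.

Lemma Cfsum_RtoC N u : Cfsum N (fun i => RtoC (u i)) = RtoC (fsum N u).
Proof. induction N; simpl; [|rewrite IHN, RtoC_add]; auto. Qed.

Lemma Cpow_add z n m : Cpow z (n + m) = Cmul (Cpow z n) (Cpow z m).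
Proof. induction n; simpl; [|rewrite IHn]; ring. Qed.

Lemma Cpow_RtoC x k : Cpow (RtoC x) k = RtoC (x ^ k).
Proof. induction k; simpl; [|rewrite IHk; apply Cext; simpl]; auto; ring. Qed.

Definition Cnorm2 (z : Cplx) : R := Cre z * Cre z + Cim z * Cim z.

Lemma Cnorm2_mul u v : Cnorm2 (Cmul u v) = Cnorm2 u * Cnorm2 v.
Proof. unfold Cnorm2; simpl; ring. Qed.

Lemma Cnorm2_nonneg u : 0 <= Cnorm2 u.
Proof. unfold Cnorm2; nra. Qed.

Lemma Cnorm2_pow_le1 z k : Cnorm2 z <= 1 -> Cnorm2 (Cpow z k) <= 1.
Proof.
  intros H. induction k; simpl; [unfold Cnorm2; simpl; lra|].
  rewrite Cnorm2_mul. pose proof (Cnorm2_nonneg z). pose proof (Cnorm2_nonneg (Cpow z k)). nra.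
Qed.

Lemma Cnorm2_le1_re u : Cnorm2 u <= 1 -> Rabs (Cre u) <= 1.
Proof. unfold Cnorm2; intros H. apply Rabs_le. nra. Qed.

Lemma Cnorm2_le1_im u : Cnorm2 u <= 1 -> Rabs (Cim u) <= 1.
Proof. unfold Cnorm2; intros H. apply Rabs_le. nra. Qed.

Lemma Cnorm_le1_Cnorm2 z : Cnorm z <= 1 -> Cnorm2 z <= 1.
Proof.
  unfold Cnorm, Cnorm2. intros H. pose proof (sqrt_pos (Cre z * Cre z + Cim z * Cim z)).
  rewrite <- (sqrt_sqrt (Cre z * Cre z + Cim z * Cim z)) by nra. nra.
Qed.

Lemma Cnorm_RtoC_le1 x : 0 <= x <= 1 -> Cnorm (RtoC x) <= 1.
Proof. intros H. unfold Cnorm; simpl. rewrite <- sqrt_1. apply sqrt_le_1_alt. nra. Qed.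

Lemma Ccv_ext u v l : (forall n, u n = v n) -> Ccv u l -> Ccv v l.
Proof. intros E [H1 H2]. split; eapply cv_ext; eauto; intros; simpl; rewrite E; auto. Qed.

Lemma Ccv_unique u l1 l2 : Ccv u l1 -> Ccv u l2 -> l1 = l2.
Proof. intros [H1 H2] [H3 H4]. apply Cext; eapply UL_sequence; eauto. Qed.

Lemma Ccv_S u l : Ccv u l -> Ccv (fun n => u (S n)) l.
Proof. intros [H1 H2]; split; apply (cv_S (fun n => _ (u n))); auto. Qed.

Lemma Ccv_add u v l m : Ccv u l -> Ccv v m -> Ccv (fun n => Cadd (u n) (v n)) (Cadd l m).
Proof. intros [H1 H2] [H3 H4]; split; simpl; apply CV_plus; auto. Qed.

Lemma Ccv_mul_l w u l : Ccv u l -> Ccv (fun n => Cmul w (u n)) (Cmul w l).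
Proof.
  intros [H1 H2]; split; simpl.
  - apply CV_minus; apply cv_scal; auto.
  - apply CV_plus; apply cv_scal; auto.
Qed.

Lemma Ccv_fsum N u l : (forall i, (i < N)%nat -> Ccv (u i) (l i)) ->
  Ccv (fun n => Cfsum N (fun i => u i n)) (Cfsum N l).
Proof.
  induction N; simpl; intros H; [split; apply cv_const|].
  apply Ccv_add; [apply IHN; intros; apply H; lia | apply H; lia].
Qed.

Definition Cis_series (u : nat -> Cplx) (s : Cplx) : Prop :=
  infinite_sum (fun k => Cre (u k)) (Cre s) /\ infinite_sum (fun k => Cim (u k)) (Cim s).

Lemma Cis_series_Cseries_cv u s : Cis_series u s <-> Cseries_cv u s.
Proof.
  assert (Hre : forall n, Cre (Cfsum (S n) u) = sum_f_R0 (fun k => Cre (u k)) n)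
    by (intros; now rewrite Cfsum_re, fsum_sum_f_R0).
  assert (Him : forall n, Cim (Cfsum (S n) u) = sum_f_R0 (fun k => Cim (u k)) n)
    by (intros; now rewrite Cfsum_im, fsum_sum_f_R0).
  unfold Cis_series, Cseries_cv, Ccv. split; intros [H1 H2]; split.
  - exact (cv_ext _ _ _ (fun n => eq_sym (Hre n)) H1).
  - exact (cv_ext _ _ _ (fun n => eq_sym (Him n)) H2).
  - exact (cv_ext _ _ _ Hre H1).
  - exact (cv_ext _ _ _ Him H2).
Qed.

Lemma Cis_series_unique u s t : Cis_series u s -> Cis_series u t -> s = t.
Proof. intros [H1 H2] [H3 H4]. apply Cext; eapply uniqueness_sum; eauto. Qed.

Lemma Csum_eq u s : Cis_series u s -> Csum u = s.
Proof.
  intros H. apply (Cis_series_unique u); [|exact H].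
  apply Cis_series_Cseries_cv. unfold Csum. apply epsilon_spec.
  exists s. now apply Cis_series_Cseries_cv.
Qed.

Lemma Cis_series_ext u v s : (forall k, u k = v k) -> Cis_series u s -> Cis_series v s.
Proof. intros E [H1 H2]. split; eapply infinite_sum_ext; eauto; intros; simpl; rewrite E; auto. Qed.

Lemma Cis_series_add u v s t : Cis_series u s -> Cis_series v t ->
  Cis_series (fun k => Cadd (u k) (v k)) (Cadd s t).
Proof. intros [H1 H2] [H3 H4]. split; simpl; apply infinite_sum_plus; auto. Qed.

Lemma Cis_series_mul_l w u s : Cis_series u s -> Cis_series (fun k => Cmul w (u k)) (Cmul w s).
Proof.
  intros [H1 H2]. split; simpl.
  - apply infinite_sum_minus; apply infinite_sum_scal; auto.
  - apply infinite_sum_plus; apply infinite_sum_scal; auto.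
Qed.

Lemma Cis_series_fsum N u l : (forall i, (i < N)%nat -> Cis_series (u i) (l i)) ->
  Cis_series (fun k => Cfsum N (fun i => u i k)) (Cfsum N l).
Proof.
  intros H. split.
  - rewrite Cfsum_re. eapply infinite_sum_ext; [intros; rewrite <- Cfsum_re; reflexivity|].
    apply infinite_sum_fsum. intros; apply H; auto.
  - rewrite Cfsum_im. eapply infinite_sum_ext; [intros; rewrite <- Cfsum_im; reflexivity|].
    apply infinite_sum_fsum. intros; apply H; auto.
Qed.

Lemma Cis_series_unshift u s : Cis_series (fun k => u (S k)) s -> Cis_series u (Cadd s (u O)).
Proof. intros [H1 H2]. split; simpl; apply (infinite_sum_unshift (fun k => _ (u k))); auto. Qed.

Lemma infinite_sum_cauchy_product u v c d U V :
  (forall k, Rabs (u k) <= c k) -> (forall k, Rabs (v k) <= d k) -> summable c -> summable d ->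
  infinite_sum u U -> infinite_sum v V ->
  infinite_sum (fun n => fsum (S n) (fun k => u k * v (n - k)%nat)) (U * V).
Proof.
  intros Hu Hv [sc Hc] [sd Hd] HU HV.
  assert (Habs : forall w e se, (forall k, Rabs (w k) <= e k) -> infinite_sum e se ->
                  ex_series (fun n => Rabs (w n))).
  { intros w e se Hw He. destruct (infinite_sum_comparison (fun n => Rabs (w n)) e se) as [s Hs];
      [intros; rewrite Rabs_Rabsolu; auto | exact He|].
    exists s. now apply is_series_Reals. }
  apply infinite_sum_ext with (fun n => sum_f_R0 (fun k => u k * v (n - k)%nat) n);
    [intros; now rewrite fsum_sum_f_R0|].
  apply is_series_Reals, is_series_mult; try apply is_series_Reals; eauto.
Qed.

Lemma Cis_series_cauchy_product u v c d U V :
  (forall k, Rabs (Cre (u k)) <= c k /\ Rabs (Cim (u k)) <= c k) ->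
  (forall k, Rabs (Cre (v k)) <= d k /\ Rabs (Cim (v k)) <= d k) ->
  summable c -> summable d -> Cis_series u U -> Cis_series v V ->
  Cis_series (fun n => Cfsum (S n) (fun k => Cmul (u k) (v (n - k)%nat))) (Cmul U V).
Proof.
  intros Hu Hv Hc Hd [Ur Ui] [Vr Vi].
  assert (P : forall w w' W W', (forall k, Rabs (w k) <= c k) -> (forall k, Rabs (w' k) <= d k) ->
            infinite_sum w W -> infinite_sum w' W' ->
            infinite_sum (fun n => fsum (S n) (fun k => w k * w' (n - k)%nat)) (W * W'))
    by (intros; eapply infinite_sum_cauchy_product; eauto).
  split; simpl.
  - eapply infinite_sum_ext;
      [|apply infinite_sum_minus;
        [apply (P _ _ _ _ (fun k => proj1 (Hu k)) (fun k => proj1 (Hv k)) Ur Vr)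
        |apply (P _ _ _ _ (fun k => proj2 (Hu k)) (fun k => proj2 (Hv k)) Ui Vi)]].
    intros n. now rewrite Cfsum_re, <- fsum_minus.
  - eapply infinite_sum_ext;
      [|apply infinite_sum_plus;
        [apply (P _ _ _ _ (fun k => proj1 (Hu k)) (fun k => proj2 (Hv k)) Ur Vi)
        |apply (P _ _ _ _ (fun k => proj2 (Hu k)) (fun k => proj1 (Hv k)) Ui Vr)]].
    intros n. now rewrite Cfsum_im, <- fsum_plus.
Qed.

Definition gf_term (c : nat -> R) (z : Cplx) (k : nat) : Cplx := Cmul (RtoC (c k)) (Cpow z k).

Lemma gf_term_bound c z k : nonneg c -> Cnorm2 z <= 1 ->
  Rabs (Cre (gf_term c z k)) <= c k /\ Rabs (Cim (gf_term c z k)) <= c k.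
Proof.
  intros Hc Hz. pose proof (Cnorm2_pow_le1 z k Hz) as Hk.
  pose proof (Cnorm2_le1_re _ Hk). pose proof (Cnorm2_le1_im _ Hk). specialize (Hc k).
  unfold gf_term. simpl. rewrite !Rmult_0_l, Rminus_0_r, Rplus_0_r, !Rabs_mult, (Rabs_pos_eq (c k)) by lra.
  split; nra.
Qed.

Lemma gf_spec c z : nonneg c -> summable c -> Cnorm2 z <= 1 -> Cis_series (gf_term c z) (gf c z).
Proof.
  intros Hc [s Hs] Hz. pose proof (fun k => gf_term_bound c z k Hc Hz) as Hb.
  destruct (infinite_sum_comparison (fun k => Cre (gf_term c z k)) c s) as [sr Hr];
    [intros; apply Hb | exact Hs|].
  destruct (infinite_sum_comparison (fun k => Cim (gf_term c z k)) c s) as [si Hi];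
    [intros; apply Hb | exact Hs|].
  replace (gf c z) with (mkC sr si) by (symmetry; apply Csum_eq; split; auto).
  split; auto.
Qed.

Lemma gf_ext c d z : (forall k, c k = d k) -> gf c z = gf d z.
Proof. intros H. replace c with d; [reflexivity | extensionality k; auto]. Qed.

Lemma gf_plus c d z : nonneg c -> nonneg d -> summable c -> summable d -> Cnorm2 z <= 1 ->
  gf (fun k => c k + d k) z = Cadd (gf c z) (gf d z).
Proof.
  intros. apply Csum_eq. eapply Cis_series_ext; [|apply Cis_series_add; apply gf_spec; eauto].
  intros k; apply Cext; unfold gf_term; simpl; ring.
Qed.

Lemma gf_scal l c z : nonneg c -> summable c -> Cnorm2 z <= 1 ->
  gf (fun k => l * c k) z = Cmul (RtoC l) (gf c z).
Proof.
  intros. apply Csum_eq. eapply Cis_series_ext; [|apply Cis_series_mul_l; apply gf_spec; eauto].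
  intros k; apply Cext; unfold gf_term; simpl; ring.
Qed.

Lemma gf_fsum N c z : (forall i, (i < N)%nat -> nonneg (c i) /\ summable (c i)) -> Cnorm2 z <= 1 ->
  gf (fun k => fsum N (fun i => c i k)) z = Cfsum N (fun i => gf (c i) z).
Proof.
  intros H Hz. apply Csum_eq.
  eapply Cis_series_ext; [|apply Cis_series_fsum; intros i Hi; apply gf_spec; [apply H|apply H|]; auto].
  intros k. unfold gf_term. apply Cext.
  - simpl. rewrite Cfsum_re, !Rmult_0_l, Rminus_0_r, <- fsum_scal_r.
    apply fsum_ext. intros; simpl; ring.
  - simpl. rewrite Cfsum_im, !Rmult_0_l, Rplus_0_r, <- fsum_scal_r.
    apply fsum_ext. intros; simpl; ring.
Qed.

Lemma gf_at_zero c : gf c Czero = RtoC (c O).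
Proof.
  apply Csum_eq. split.
  - change (Cre (RtoC (c O))) with (c O).
    replace (c O) with (Cre (gf_term c Czero O)) by (unfold gf_term; simpl; ring).
    apply infinite_sum_head. intros k. unfold gf_term; simpl; ring.
  - change (Cim (RtoC (c O))) with 0.
    replace 0 with (Cim (gf_term c Czero O)) by (unfold gf_term; simpl; ring).
    apply infinite_sum_head. intros k. unfold gf_term; simpl; ring.
Qed.

Lemma gf_shift c z : nonneg c -> summable c -> Cnorm2 z <= 1 ->
  gf c z = Cadd (RtoC (c O)) (Cmul z (gf (fun k => c (S k)) z)).
Proof.
  intros Hn Hs Hz. apply Csum_eq.
  pose proof (Cis_series_mul_l z _ _
    (gf_spec (fun k => c (S k)) z (fun k => Hn (S k)) (summable_shift c Hs) Hz)) as H.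
  apply (Cis_series_ext _ (fun k => gf_term c z (S k))) in H;
    [|intros k; unfold gf_term; apply Cext; simpl; ring].
  apply Cis_series_unshift in H.
  replace (Cadd (RtoC (c O)) _) with (Cadd (Cmul z (gf (fun k => c (S k)) z)) (gf_term c z O));
    [exact H | apply Cext; unfold gf_term; simpl; ring].
Qed.

Definition conv (c d : nat -> R) (n : nat) : R := fsum (S n) (fun t => c t * d (n - t)%nat).

Lemma conv_nonneg c d : nonneg c -> nonneg d -> nonneg (conv c d).
Proof. intros Hc Hd n. apply fsum_nonneg. intros. apply Rmult_le_pos; auto. Qed.

Lemma conv_summable c d : nonneg c -> nonneg d -> summable c -> summable d -> summable (conv c d).
Proof.
  intros Hc Hd Sc Sd. destruct Sc as [sc Hsc], Sd as [sd Hsd]. exists (sc * sd).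
  apply (infinite_sum_cauchy_product c d c d); auto;
    [intros k; rewrite Rabs_pos_eq; auto; lra .. | exists sc | exists sd]; auto.
Qed.

Lemma gf_term_conv c d z n :
  gf_term (conv c d) z n = Cfsum (S n) (fun k => Cmul (gf_term c z k) (gf_term d z (n - k))).
Proof.
  unfold gf_term, conv. rewrite <- Cfsum_RtoC.
  replace (Cmul (Cfsum (S n) _) (Cpow z n))
    with (Cfsum (S n) (fun k => Cmul (Cpow z n) (RtoC (c k * d (n - k)%nat))))
    by (rewrite Cfsum_mul_l; ring).
  apply Cfsum_ext. intros k Hk.
  replace n with (k + (n - k))%nat at 1 by lia.
  rewrite Cpow_add, <- RtoC_mul. ring.
Qed.

Lemma gf_conv c d z : nonneg c -> nonneg d -> summable c -> summable d -> Cnorm2 z <= 1 ->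
  gf (conv c d) z = Cmul (gf c z) (gf d z).
Proof.
  intros Hc Hd Sc Sd Hz. apply Csum_eq.
  eapply Cis_series_ext; [intros n; symmetry; apply gf_term_conv|].
  apply (Cis_series_cauchy_product _ _ c d); auto;
    [intros; apply gf_term_bound; auto .. | apply gf_spec; auto | apply gf_spec; auto].
Qed.

(** * The law of the chain *)

Section Law.
Variables (N : nat) (a : nat -> nat -> nat -> R) (b : nat -> R) (x0 : nat) (q : nat -> R).
Hypothesis Ha_nonneg : forall i j, nonneg (a i j).
Hypothesis Ha_summable : forall i j, (i < N)%nat -> (j < N)%nat -> summable (a i j).
Hypothesis Hb_nonneg : nonneg b.
Hypothesis Hb_summable : summable b.
Hypothesis Hq_nonneg : forall j, (j < N)%nat -> 0 <= q j.
Hypothesis Hb0 : b O = 0.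

Notation L n y j := (law N a b x0 q n y j).

(* [conv (b o S) (a i j)] is the law of [A + B - 1] started from phase [i]. *)
Lemma law_S n y j : L (S n) y j =
  fsum N (fun i => conv (fun t => L n (S t) i) (a i j) y
                   + L n O i * conv (fun c => b (S c)) (a i j) y).
Proof.
  cbn [law]. apply fsum_ext. intros i _. unfold conv. f_equal. f_equal.
  apply fsum_ext; intros; ring.
Qed.

Let Hb'_nonneg : nonneg (fun c => b (S c)) := fun c => Hb_nonneg (S c).
Let Hb'_summable : summable (fun c => b (S c)) := summable_shift b Hb_summable.

Lemma law_nonneg n j : (j < N)%nat -> nonneg (fun y => L n y j).
Proof.
  revert j; induction n; intros j Hj y.
  - simpl. destruct (Nat.eqb y x0); auto; lra.
  - rewrite law_S. apply fsum_nonneg. intros i Hi. apply Rplus_le_le_0_compat.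
    + apply conv_nonneg; [intros t; apply IHn | apply Ha_nonneg]; auto.
    + apply Rmult_le_pos; [apply IHn; auto | apply conv_nonneg; auto].
Qed.

Lemma law_summable n j : (j < N)%nat -> summable (fun y => L n y j).
Proof.
  revert j; induction n; intros j Hj.
  - exists (q j). eapply infinite_sum_ext; [|apply (infinite_sum_indicator x0 (q j))].
    intros k; reflexivity.
  - eapply summable_ext; [intros y; symmetry; apply law_S|].
    apply summable_fsum. intros i Hi. apply summable_plus.
    + apply conv_summable; auto. intros t; apply law_nonneg; auto.
      apply (summable_shift (fun y => L n y i)); auto.
    + apply summable_scal, conv_summable; auto.
Qed.

Lemma gf_law_S n j z : (j < N)%nat -> Cnorm2 z <= 1 ->
  gf (fun y => L (S n) y j) z =
  Cfsum N (fun i => Cmul (gf (a i j) z)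
    (Cadd (gf (fun t => L n (S t) i) z) (Cmul (RtoC (L n O i)) (gf (fun c => b (S c)) z)))).
Proof.
  intros Hj Hz.
  assert (HL : forall i, (i < N)%nat ->
            nonneg (fun t => L n (S t) i) /\ summable (fun t => L n (S t) i)).
  { intros i Hi. split; [intros t; apply law_nonneg; auto|].
    apply (summable_shift (fun y => L n y i)), law_summable; auto. }
  assert (Hterm : forall i, (i < N)%nat ->
            nonneg (fun y => conv (fun t => L n (S t) i) (a i j) y
                             + L n O i * conv (fun c => b (S c)) (a i j) y)
            /\ summable (fun y => conv (fun t => L n (S t) i) (a i j) y
                             + L n O i * conv (fun c => b (S c)) (a i j) y)).
  { intros i Hi. destruct (HL i Hi). split.
    - intros y. apply Rplus_le_le_0_compat; [apply conv_nonneg; auto|].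
      apply Rmult_le_pos; [apply law_nonneg | apply conv_nonneg]; auto.
    - apply summable_plus; [apply conv_summable; auto|].
      apply summable_scal, conv_summable; auto. }
  rewrite (gf_ext _ _ z (fun y => law_S n y j)), gf_fsum by auto.
  apply Cfsum_ext. intros i Hi. destruct (HL i Hi).
  assert (nonneg (fun y => L n O i * conv (fun c => b (S c)) (a i j) y)).
  { intros y. apply Rmult_le_pos; [apply law_nonneg | apply conv_nonneg]; auto. }
  rewrite gf_plus, gf_scal, !gf_conv; auto using conv_nonneg, conv_summable, summable_scal.
  ring.
Qed.

(* One step of the chain on generating functions: the atom at 0 is pushed through
   [A + B - 1] instead of [A - 1]. *)
Lemma gf_law_recursion n j z : (j < N)%nat -> Cnorm2 z <= 1 ->
  Cmul z (gf (fun y => L (S n) y j) z) =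
  Cadd (Cfsum N (fun i => Cmul (gf (a i j) z) (gf (fun y => L n y i) z)))
       (Cmul (Csub (gf b z) Cone) (Cfsum N (fun i => Cmul (gf (a i j) z) (RtoC (L n O i))))).
Proof.
  intros Hj Hz. rewrite gf_law_S, (gf_shift b), Hb0 by auto.
  rewrite (Cfsum_ext N (fun i => Cmul (gf (a i j) z) (gf (fun y => L n y i) z))
     (fun i => Cmul (gf (a i j) z) (Cadd (RtoC (L n O i)) (Cmul z (gf (fun t => L n (S t) i) z))))).
  - rewrite <- !Cfsum_mul_l, <- Cfsum_add. apply Cfsum_ext. intros i Hi.
    change (RtoC 0) with Czero. ring.
  - intros i Hi. rewrite (gf_shift (fun y => L n y i)); auto using law_nonneg, law_summable.
Qed.

End Law.

Lemma balance_equation N a b x0 q f :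
  (forall i j, nonneg (a i j)) -> (forall i j, (i < N)%nat -> (j < N)%nat -> summable (a i j)) ->
  nonneg b -> summable b -> b O = 0 -> (forall j, (j < N)%nat -> 0 <= q j) ->
  (forall z, Cnorm z <= 1 -> forall j, (j < N)%nat ->
     Ccv (fun n => gf (fun y => law N a b x0 q n y j) z) (f z j)) ->
  forall z, Cnorm z <= 1 -> forall j, (j < N)%nat ->
  Cmul z (f z j) = Cadd (Cfsum N (fun i => Cmul (gf (a i j) z) (f z i)))
       (Cmul (Csub (gf b z) Cone) (Cfsum N (fun i => Cmul (gf (a i j) z) (f Czero i)))).
Proof.
  intros Ha Has Hb Hbs Hb0 Hq Hf z Hz j Hj.
  assert (H0 : Cnorm Czero <= 1) by (apply (Cnorm_RtoC_le1 0); lra).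
  apply (Ccv_unique (fun n => Cmul z (gf (fun y => law N a b x0 q (S n) y j) z))).
  - apply Ccv_mul_l, (Ccv_S (fun n => gf (fun y => law N a b x0 q n y j) z)), Hf; auto.
  - eapply Ccv_ext;
      [intros n; symmetry; apply gf_law_recursion; auto; now apply Cnorm_le1_Cnorm2|].
    apply Ccv_add; [|apply Ccv_mul_l]; apply Ccv_fsum; intros i Hi; apply Ccv_mul_l.
    + apply Hf; auto.
    + eapply Ccv_ext; [|apply (Hf Czero H0 i Hi)]. intros n. apply gf_at_zero.
Qed.

(** * Invariant measures of an irreducible nonnegative matrix *)

Lemma exists_argmax N (r : nat -> R) :
  (0 < N)%nat -> exists k, (k < N)%nat /\ forall i, (i < N)%nat -> r i <= r k.
Proof.
  induction N as [|M IH]; intros H; [lia|].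
  destruct (Nat.eq_dec M 0) as [->|HM].
  - exists O. split; [lia|]. intros i Hi. replace i with O by lia. lra.
  - destruct IH as [k [Hk Hmax]]; [lia|].
    destruct (Rle_dec (r M) (r k)).
    + exists k. split; [lia|]. intros i Hi.
      destruct (Nat.eq_dec i M) as [->|]; [auto | apply Hmax; lia].
    + exists M. split; [lia|]. intros i Hi.
      destruct (Nat.eq_dec i M) as [->|]; [lra|]. specialize (Hmax i ltac:(lia)). lra.
Qed.

Section Invariant.
Variables (N : nat) (P : nat -> nat -> R).
Hypothesis HP_nonneg : forall i j, (i < N)%nat -> (j < N)%nat -> 0 <= P i j.
Hypothesis HP_irr : irreducible N P.

Definition invariant (u : nat -> R) : Prop :=
  forall j, (j < N)%nat -> fsum N (fun i => u i * P i j) = u j.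

Lemma matpow_nonneg n i j : (j < N)%nat -> 0 <= matpow N P n i j.
Proof.
  revert j; induction n; intros j Hj; simpl.
  - destruct (Nat.eqb i j); lra.
  - apply fsum_nonneg. intros l Hl. apply Rmult_le_pos; auto.
Qed.

Lemma invariant_matpow u : invariant u ->
  forall n j, (j < N)%nat -> fsum N (fun i => u i * matpow N P n i j) = u j.
Proof.
  intros H n. induction n; intros j Hj; simpl.
  - rewrite <- (fsum_delta N u j Hj). apply fsum_ext. intros i _.
    destruct (Nat.eqb i j); ring.
  - rewrite <- H by auto.
    rewrite (fsum_ext N _ (fun i => fsum N (fun l => u i * matpow N P n i l * P l j)))
      by (intros i _; rewrite <- fsum_scal_l; apply fsum_ext; intros; ring).
    rewrite fsum_swap. apply fsum_ext. intros l Hl.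
    rewrite <- (IHn l Hl), <- fsum_scal_r. apply fsum_ext; intros; ring.
Qed.

Lemma invariant_distribution_pos pi : invariant pi ->
  (forall j, (j < N)%nat -> 0 <= pi j) -> fsum N pi = 1 ->
  forall j, (j < N)%nat -> 0 < pi j.
Proof.
  intros Hinv Hnonneg Hsum.
  assert (exists i0, (i0 < N)%nat /\ 0 < pi i0) as [i0 [Hi0 Hpi0]].
  { apply Classical_Prop.NNPP. intros Hno.
    assert (fsum N pi <= fsum N (fun _ => 0)); [|rewrite fsum_const0 in *; lra].
    apply fsum_le. intros i Hi. apply Rnot_lt_le. intros Hlt. apply Hno. eauto. }
  intros j Hj. destruct (HP_irr i0 j Hi0 Hj) as [n Hn].
  rewrite <- (invariant_matpow pi Hinv n j Hj).
  apply Rlt_le_trans with (pi i0 * matpow N P n i0 j); [nra|].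
  apply (fsum_ge_term N (fun i => pi i * matpow N P n i j) i0); auto.
  intros i Hi. apply Rmult_le_pos; auto using matpow_nonneg.
Qed.

(* With [K] the maximum of [w i / pi i], the invariant vector [K pi - w] is nonnegative and
   vanishes at the maximizer; irreducibility propagates the zero to every state. *)
Lemma invariant_unique pi w : invariant pi ->
  (forall j, (j < N)%nat -> 0 <= pi j) -> fsum N pi = 1 -> invariant w ->
  forall j, (j < N)%nat -> w j = fsum N w * pi j.
Proof.
  intros Hpi Hnonneg Hsum Hw.
  assert (HN : (0 < N)%nat) by (destruct N; [simpl in Hsum; lra | lia]).
  pose proof (invariant_distribution_pos pi Hpi Hnonneg Hsum) as Hpos.
  destruct (exists_argmax N (fun i => w i / pi i) HN) as [k [Hk Hmax]].
  set (K := w k / pi k) in *.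
  assert (HK : forall i, (i < N)%nat -> w i = K * pi i).
  { intros i Hi. destruct (HP_irr i k Hi Hk) as [n Hn].
    assert (Hzero : fsum N (fun l => (K * pi l - w l) * matpow N P n l k) = 0).
    { rewrite (fsum_ext N _ (fun l => K * (pi l * matpow N P n l k) - w l * matpow N P n l k))
        by (intros; ring).
      rewrite fsum_minus, fsum_scal_l, !invariant_matpow; auto.
      unfold K. field. apply Rgt_not_eq, Hpos; auto. }
    assert (Hterm : forall l, (l < N)%nat -> 0 <= (K * pi l - w l) * matpow N P n l k).
    { intros l Hl. apply Rmult_le_pos; [|apply matpow_nonneg; auto].
      specialize (Hmax l Hl). specialize (Hpos l Hl).
      apply Rmult_le_compat_r with (r := pi l) in Hmax; [|lra].
      unfold Rdiv in Hmax. rewrite Rmult_assoc, Rinv_l in Hmax by lra. lra. }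
    pose proof (fsum_nonneg_eq0 N _ Hterm Hzero i Hi) as Hi0.
    apply Rmult_integral in Hi0. destruct Hi0; lra. }
  intros j Hj. rewrite (fsum_ext N w (fun i => K * pi i)), fsum_scal_l, Hsum by auto.
  rewrite HK by auto. ring.
Qed.

End Invariant.

Definition rgf (c : nat -> R) (x : R) : R := rsum (fun k => c k * x ^ k).

Lemma pow_le1 x n : 0 <= x <= 1 -> x ^ n <= 1.
Proof. intros H. induction n; simpl; [lra|]. pose proof (pow_le x n ltac:(lra)). nra. Qed.

Lemma one_minus_pow_bounds x n : 0 <= x <= 1 -> 0 <= 1 - x ^ n <= INR n * (1 - x).
Proof.
  intros Hx. induction n; [simpl; lra|]. rewrite S_INR. simpl (x ^ S n).
  pose proof (pow_le x n ltac:(lra)). pose proof (pow_le1 x n Hx). nra.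
Qed.

Lemma rgf_spec c x : nonneg c -> summable c -> 0 <= x <= 1 ->
  infinite_sum (fun k => c k * x ^ k) (rgf c x) /\ gf c (RtoC x) = RtoC (rgf c x).
Proof.
  intros Hn Hs Hx.
  assert (Hx2 : Cnorm2 (RtoC x) <= 1) by (unfold Cnorm2; simpl; nra).
  destruct (gf_spec c (RtoC x) Hn Hs Hx2) as [Hre Him].
  assert (Hr : infinite_sum (fun k => c k * x ^ k) (Cre (gf c (RtoC x)))).
  { eapply infinite_sum_ext; [|exact Hre]. intros k. unfold gf_term. rewrite Cpow_RtoC. simpl; ring. }
  assert (Hi : Cim (gf c (RtoC x)) = 0).
  { eapply uniqueness_sum; [exact Him|]. eapply infinite_sum_ext; [|apply infinite_sum_0].
    intros k. unfold gf_term. rewrite Cpow_RtoC. simpl; ring. }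
  assert (E : rgf c x = Cre (gf c (RtoC x))) by (apply rsum_eq; auto).
  rewrite E. split; [exact Hr | apply Cext; auto].
Qed.

Lemma infinite_sum_rgf c x : nonneg c -> summable c -> 0 <= x <= 1 ->
  infinite_sum (fun k => c k * x ^ k) (rgf c x).
Proof. intros. now apply rgf_spec. Qed.

Lemma gf_RtoC c x : nonneg c -> summable c -> 0 <= x <= 1 -> gf c (RtoC x) = RtoC (rgf c x).
Proof. intros. now apply rgf_spec. Qed.

Lemma rgf_nonneg c x : nonneg c -> summable c -> 0 <= x <= 1 -> 0 <= rgf c x.
Proof.
  intros. apply (infinite_sum_le (fun _ => 0) (fun k => c k * x ^ k));
    auto using infinite_sum_0, infinite_sum_rgf.
  intros k. apply Rmult_le_pos; auto. apply pow_le; lra.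
Qed.

Lemma rgf_le c x y : nonneg c -> summable c -> 0 <= x -> x <= y -> y <= 1 -> rgf c x <= rgf c y.
Proof.
  intros. apply (infinite_sum_le (fun k => c k * x ^ k) (fun k => c k * y ^ k));
    try apply infinite_sum_rgf; auto; try lra.
  intros k. apply Rmult_le_compat_l; auto. apply pow_incr; lra.
Qed.

Lemma rgf_at_one c s : infinite_sum c s -> rgf c 1 = s.
Proof. intros. apply rsum_eq. eapply infinite_sum_ext; [|eassumption]. intros; rewrite pow1; ring. Qed.

Lemma rgf_at_zero c : rgf c 0 = c O.
Proof.
  apply rsum_eq.
  replace (c O) with (c O * 0 ^ 0) by (simpl; ring).
  apply (infinite_sum_head (fun k => c k * 0 ^ k)). intros; simpl; ring.
Qed.

Lemma rgf_chord_bound c s d x : nonneg c -> infinite_sum c s ->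
  infinite_sum (fun k => INR k * c k) d -> 0 <= x <= 1 -> 0 <= s - rgf c x <= (1 - x) * d.
Proof.
  intros Hn Hs Hd Hx.
  assert (E : infinite_sum (fun k => c k * (1 - x ^ k)) (s - rgf c x)).
  { eapply infinite_sum_ext;
      [|apply infinite_sum_minus; [exact Hs | apply infinite_sum_rgf; auto; now exists s]].
    intros; simpl; ring. }
  split.
  - apply (infinite_sum_le (fun _ => 0) (fun k => c k * (1 - x ^ k))); auto using infinite_sum_0.
    intros k. apply Rmult_le_pos; auto. apply one_minus_pow_bounds; auto.
  - apply (infinite_sum_le (fun k => c k * (1 - x ^ k)) (fun k => (1 - x) * (INR k * c k)));
      auto using infinite_sum_scal.
    intros k. pose proof (one_minus_pow_bounds x k Hx). specialize (Hn k). nra.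
Qed.

Lemma infinite_sum_cv_to_dominant (g : nat -> nat -> R) (w : nat -> R) (W : R) (G : nat -> R) :
  (forall k y, 0 <= g k y <= w y) -> infinite_sum w W ->
  (forall y, Un_cv (fun k => g k y) (w y)) -> (forall k, infinite_sum (g k) (G k)) ->
  Un_cv G W.
Proof.
  intros Hb HW Hc HG e He.
  destruct (HW (e / 3)) as [Y HY]; [lra|]. specialize (HY Y (le_n _)). unfold R_dist in HY.
  assert (Hpw : sum_f_R0 w Y <= W).
  { apply infinite_sum_ge_partial; auto. intros k. pose proof (Hb O k); lra. }
  assert (Hfin : Un_cv (fun k => sum_f_R0 (g k) Y) (sum_f_R0 w Y)).
  { eapply cv_ext; [intros k; apply fsum_sum_f_R0|]. rewrite <- fsum_sum_f_R0.
    apply (cv_fsum (S Y) (fun y k => g k y)). auto. }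
  destruct (Hfin (e / 3)) as [K HK]; [lra|].
  exists K. intros k Hk. specialize (HK k Hk). unfold R_dist in *.
  assert (Hpg : sum_f_R0 (g k) Y <= G k) by (apply infinite_sum_ge_partial; auto; apply Hb).
  assert (Hd : sum_f_R0 (fun y => w y - g k y) Y <= W - G k).
  { apply infinite_sum_ge_partial; [intros y; pose proof (Hb k y); lra | now apply infinite_sum_minus]. }
  rewrite minus_sum in Hd. rewrite Rabs_left1 in HY by lra.
  apply Rabs_def2 in HK. apply Rabs_def1; lra.
Qed.

Section AbelLimits.
Variable xs : nat -> R.
Hypothesis Hxs : forall k, 0 <= xs k < 1.
Hypothesis Hxs_cv : Un_cv xs 1.

Lemma abel_limit c s : nonneg c -> infinite_sum c s -> Un_cv (fun k => rgf c (xs k)) s.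
Proof.
  intros Hn Hs.
  apply (infinite_sum_cv_to_dominant (fun k y => c y * xs k ^ y) c s); auto.
  - intros k y. pose proof (Hxs k). split.
    + apply Rmult_le_pos; auto. apply pow_le; lra.
    + rewrite <- (Rmult_1_r (c y)) at 2. apply Rmult_le_compat_l; auto. apply pow_le1; lra.
  - intros y. pose proof (cv_scal (c y) _ _ (cv_pow _ _ y Hxs_cv)) as H.
    now rewrite pow1, Rmult_1_r in H.
  - intros k. apply infinite_sum_rgf; [auto | now exists s | pose proof (Hxs k); lra].
Qed.

(* [(1 - x^y) / (1 - x) = 1 + x + ... + x^(y-1)] increases to [y] as [x] tends to [1]. *)
Lemma abel_slope_limit c s d : nonneg c -> infinite_sum c s ->
  infinite_sum (fun k => INR k * c k) d ->
  Un_cv (fun k => (s - rgf c (xs k)) / (1 - xs k)) d.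
Proof.
  intros Hn Hs Hd. set (geo x y := fsum y (fun t => x ^ t)).
  assert (Hgeo : forall x y, (1 - x) * geo x y = 1 - x ^ y).
  { intros x y. unfold geo. induction y; simpl; [ring|]. rewrite Rmult_plus_distr_l, IHy. ring. }
  assert (Hgeo_bd : forall x y, 0 <= x <= 1 -> 0 <= geo x y <= INR y).
  { intros x y Hx. unfold geo. induction y; [simpl; lra|]. rewrite S_INR. simpl (fsum (S y) _).
    pose proof (pow_le x y ltac:(lra)). pose proof (pow_le1 x y Hx). lra. }
  apply (infinite_sum_cv_to_dominant (fun k y => c y * geo (xs k) y) (fun y => INR y * c y) d); auto.
  - intros k y. pose proof (Hxs k). pose proof (Hgeo_bd (xs k) y). specialize (Hn y). split; nra.
  - intros y. rewrite Rmult_comm. apply cv_scal.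
    replace (INR y) with (fsum y (fun t => 1 ^ t))
      by (rewrite (fsum_ext y _ (fun _ => 1)) by (intros; apply pow1);
          clear; induction y; [simpl; ring | rewrite S_INR, <- IHy; simpl; ring]).
    apply (cv_fsum y (fun t k => xs k ^ t)). intros; now apply cv_pow.
  - intros k. pose proof (Hxs k).
    replace ((s - rgf c (xs k)) / (1 - xs k)) with (/ (1 - xs k) * (s - rgf c (xs k)))
      by (unfold Rdiv; ring).
    eapply infinite_sum_ext;
      [|apply infinite_sum_scal, infinite_sum_minus;
        [exact Hs | apply (infinite_sum_rgf c (xs k)); [auto | now exists s | lra]]].
    intros y. simpl. replace (geo (xs k) y) with ((1 - xs k ^ y) / (1 - xs k))
      by (rewrite <- Hgeo; field; lra).
    field. lra.
Qed.

End AbelLimits.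

Definition seq_limit (u : nat -> R) : R := epsilon (inhabits 0) (fun l => Un_cv u l).

Lemma seq_limit_spec u : (exists l, Un_cv u l) -> Un_cv u (seq_limit u).
Proof. intros H. unfold seq_limit. now apply epsilon_spec. Qed.

Definition toward1 (k : nat) : R := 1 - / (INR k + 2).

Lemma toward1_range k : 0 <= toward1 k < 1.
Proof.
  unfold toward1. pose proof (pos_INR k).
  assert (0 < / (INR k + 2) <= / 2)
    by (split; [apply Rinv_0_lt_compat | apply Rinv_le_contravar]; lra).
  lra.
Qed.

Lemma toward1_le_S k : toward1 k <= toward1 (S k).
Proof.
  unfold toward1. rewrite S_INR. pose proof (pos_INR k).
  assert (/ (INR k + 1 + 2) <= / (INR k + 2)) by (apply Rinv_le_contravar; lra). lra.
Qed.

Lemma toward1_cv : Un_cv toward1 1.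
Proof.
  replace 1 with (1 - 0) by ring. apply CV_minus; [apply cv_const|].
  eapply cv_ext; [|apply (cv_S _ _ cv_inv_INR_S)].
  intros n. cbv beta. rewrite S_INR. f_equal. ring.
Qed.

Section Limits.
Variables (N : nat) (a : nat -> nat -> nat -> R) (b : nat -> R) (x0 : nat) (q : nat -> R)
  (f : Cplx -> nat -> Cplx) (pi : nat -> R).
Hypothesis Ha_nonneg : forall i j, nonneg (a i j).
Hypothesis Ha_summable : forall i j, (i < N)%nat -> (j < N)%nat -> summable (a i j).
Hypothesis Hstoch : forall i, (i < N)%nat -> fsum N (fun j => rsum (a i j)) = 1.
Hypothesis Hirr : irreducible N (fun i j => rsum (a i j)).
Hypothesis Hpi_nonneg : forall j, (j < N)%nat -> 0 <= pi j.
Hypothesis Hpi_sum : fsum N pi = 1.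
Hypothesis Hpi_stat : forall j, (j < N)%nat -> fsum N (fun i => pi i * rsum (a i j)) = pi j.
Hypothesis Halpha : forall i j, (i < N)%nat -> (j < N)%nat -> summable (fun k => INR k * a i j k).
Hypothesis Hb_nonneg : nonneg b.
Hypothesis Hb0 : b O = 0.
Hypothesis Hb_sum : infinite_sum b 1.
Hypothesis HEB : summable (fun k => INR k * b k).
Hypothesis Hq_nonneg : forall j, (j < N)%nat -> 0 <= q j.
Hypothesis Hq_sum : fsum N q = 1.
Hypothesis Hf : forall z, Cnorm z <= 1 -> forall j, (j < N)%nat ->
  Ccv (fun n => gf (fun y => law N a b x0 q n y j) z) (f z j).

Notation L n y j := (law N a b x0 q n y j).

Definition Pmat i j := rsum (a i j).
Definition alpha i j := rsum (fun k => INR k * a i j k).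
Definition alpha_row i := fsum N (alpha i).
Definition rho := fsum N (fun i => alpha_row i * pi i).
Definition EB := rsum (fun k => INR k * b k).
Definition A i j x := rgf (a i j) x.
Definition A_row i x := fsum N (fun j => A i j x).
Definition Bgf x := rgf b x.
(* [Fn n i x = E[x^(X_n); J_(n+1) = i]], [idle n i = P(X_n = 0, J_(n+1) = i)],
   [phase n i = P(J_(n+1) = i)] and [flim i x = f_i(x)]. *)
Definition Fn n i x := rgf (fun y => L n y i) x.
Definition idle n i := L n O i.
Definition phase n i := Fn n i 1.
Definition flim i x := Cre (f (RtoC x) i).

Let Hb_summable : summable b := ex_intro _ 1 Hb_sum.
Let HL_nonneg n i : (i < N)%nat -> nonneg (fun y => L n y i) :=
  law_nonneg N a b x0 q Ha_nonneg Hb_nonneg Hq_nonneg n i.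
Let HL_summable n i : (i < N)%nat -> summable (fun y => L n y i) :=
  law_summable N a b x0 q Ha_nonneg Ha_summable Hb_nonneg Hb_summable Hq_nonneg n i.

Lemma Pmat_spec i j : (i < N)%nat -> (j < N)%nat -> infinite_sum (a i j) (Pmat i j).
Proof. intros. destruct (Ha_summable i j) as [s Hs]; auto. unfold Pmat. now rewrite (rsum_eq _ s). Qed.

Lemma alpha_spec i j : (i < N)%nat -> (j < N)%nat ->
  infinite_sum (fun k => INR k * a i j k) (alpha i j).
Proof. intros. destruct (Halpha i j) as [s Hs]; auto. unfold alpha. now rewrite (rsum_eq _ s). Qed.

Lemma EB_spec : infinite_sum (fun k => INR k * b k) EB.
Proof. destruct HEB as [s Hs]. unfold EB. now rewrite (rsum_eq _ s). Qed.

Lemma Pmat_nonneg i j : (i < N)%nat -> (j < N)%nat -> 0 <= Pmat i j.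
Proof.
  intros. apply (infinite_sum_le (fun _ => 0) (a i j)); auto using infinite_sum_0, Pmat_spec.
  apply Ha_nonneg.
Qed.

Lemma A_at_one i j : (i < N)%nat -> (j < N)%nat -> A i j 1 = Pmat i j.
Proof. intros. apply rgf_at_one, Pmat_spec; auto. Qed.

Lemma Bgf_at_one : Bgf 1 = 1.
Proof. now apply rgf_at_one. Qed.

Lemma flim_spec i x : (i < N)%nat -> 0 <= x <= 1 ->
  f (RtoC x) i = RtoC (flim i x) /\ Un_cv (fun n => Fn n i x) (flim i x).
Proof.
  intros Hi Hx. destruct (Hf (RtoC x) (Cnorm_RtoC_le1 x Hx) i Hi) as [Hre Him].
  assert (E : forall n, gf (fun y => L n y i) (RtoC x) = RtoC (Fn n i x))
    by (intros n; apply gf_RtoC; auto).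
  split.
  - apply Cext; [reflexivity|]. symmetry. apply (UL_sequence (fun _ => 0)); [apply cv_const|].
    eapply cv_ext; [|exact Him]. intros n; cbv beta; now rewrite E.
  - eapply cv_ext; [|exact Hre]. intros n; cbv beta; now rewrite E.
Qed.

Lemma flim_le i x y : (i < N)%nat -> 0 <= x -> x <= y -> y <= 1 -> flim i x <= flim i y.
Proof.
  intros Hi Hx Hxy Hy. apply (@Rle_cv_lim (fun n => Fn n i x) (fun n => Fn n i y));
    [|apply flim_spec; auto; lra ..].
  intros n. apply rgf_le; auto.
Qed.

Lemma Fn_recursion n j x : (j < N)%nat -> 0 <= x <= 1 ->
  x * Fn (S n) j x =
  fsum N (fun i => A i j x * Fn n i x) + (Bgf x - 1) * fsum N (fun i => A i j x * idle n i).
Proof.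
  intros Hj Hx.
  assert (Hx2 : Cnorm2 (RtoC x) <= 1) by (unfold Cnorm2; simpl; nra).
  pose proof (gf_law_recursion N a b x0 q Ha_nonneg Ha_summable Hb_nonneg Hb_summable Hq_nonneg
                Hb0 n j (RtoC x) Hj Hx2) as H.
  rewrite (Cfsum_ext N _ (fun i => RtoC (A i j x * Fn n i x))) in H
    by (intros i Hi; unfold A, Fn; rewrite !gf_RtoC; auto using RtoC_mul).
  rewrite (Cfsum_ext N (fun i => Cmul (gf (a i j) (RtoC x)) (RtoC (L n O i)))
                        (fun i => RtoC (A i j x * idle n i))) in H
    by (intros i Hi; unfold A; rewrite gf_RtoC; auto using RtoC_mul).
  unfold Fn, Bgf in *. rewrite !gf_RtoC, !Cfsum_RtoC, RtoC_sub_one, !RtoC_mul, RtoC_add in H; auto.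
  now apply RtoC_inj.
Qed.


Lemma flim_balance j x : (j < N)%nat -> 0 <= x <= 1 ->
  x * flim j x =
  fsum N (fun i => A i j x * flim i x) + (Bgf x - 1) * fsum N (fun i => A i j x * flim i 0).
Proof.
  intros Hj Hx.
  pose proof (balance_equation N a b x0 q f Ha_nonneg Ha_summable Hb_nonneg Hb_summable Hb0
                Hq_nonneg Hf (RtoC x) (Cnorm_RtoC_le1 x Hx) j Hj) as H.
  change Czero with (RtoC 0) in H.
  rewrite (Cfsum_ext N (fun i => Cmul (gf (a i j) (RtoC x)) (f (RtoC x) i))
                        (fun i => RtoC (A i j x * flim i x))) in H
    by (intros i Hi; unfold A; rewrite gf_RtoC, (proj1 (flim_spec i x Hi Hx)); auto using RtoC_mul).
  rewrite (Cfsum_ext N (fun i => Cmul (gf (a i j) (RtoC x)) (f (RtoC 0) i))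
                        (fun i => RtoC (A i j x * flim i 0))) in H
    by (intros i Hi; unfold A; rewrite gf_RtoC, (proj1 (flim_spec i 0 Hi ltac:(lra))); auto using RtoC_mul).
  unfold Bgf. rewrite (proj1 (flim_spec j x Hj Hx)), gf_RtoC, !Cfsum_RtoC, RtoC_sub_one, !RtoC_mul,
    RtoC_add in H; auto.
  now apply RtoC_inj.
Qed.

(** * The phase process and [f(1) = pi] *)

Lemma phase_S n j : (j < N)%nat -> phase (S n) j = fsum N (fun i => Pmat i j * phase n i).
Proof.
  intros Hj. pose proof (Fn_recursion n j 1 Hj ltac:(lra)) as H.
  rewrite Bgf_at_one, Rmult_1_l, Rminus_diag, Rmult_0_l, Rplus_0_r in H.
  unfold phase. rewrite H. apply fsum_ext. intros i Hi. now rewrite A_at_one.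
Qed.

Lemma phase_sum n : fsum N (phase n) = 1.
Proof.
  induction n.
  - rewrite <- Hq_sum. apply fsum_ext. intros j Hj. apply rgf_at_one.
    eapply infinite_sum_ext; [|apply (infinite_sum_indicator x0 (q j))]. reflexivity.
  - rewrite (fsum_ext N _ (fun j => fsum N (fun i => Pmat i j * phase n i))) by (intros; now apply phase_S).
    rewrite fsum_swap, <- IHn. apply fsum_ext. intros i Hi.
    rewrite fsum_scal_r. unfold Pmat. rewrite Hstoch; auto. ring.
Qed.

Lemma phase_cv j : (j < N)%nat -> Un_cv (fun n => phase n j) (flim j 1).
Proof. intros Hj. apply (flim_spec j 1 Hj). lra. Qed.

Lemma flim_one j : (j < N)%nat -> flim j 1 = pi j.
Proof.
  intros Hj.
  assert (Hsum : fsum N (fun i => flim i 1) = 1).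
  { apply (UL_sequence (fun n => fsum N (fun i => phase n i))).
    - apply cv_fsum. intros; now apply phase_cv.
    - eapply cv_ext; [|apply (cv_const 1)]. intros n. now rewrite <- (phase_sum n). }
  assert (Hinv : invariant N Pmat (fun i => flim i 1)).
  { intros k Hk. apply (UL_sequence (fun n => phase (S n) k)).
    - eapply cv_ext; [intros n; symmetry; now apply phase_S|]. apply cv_fsum. intros i Hi.
      rewrite Rmult_comm. now apply cv_scal, phase_cv.
    - apply (cv_S (fun n => phase n k)). now apply phase_cv. }
  rewrite (invariant_unique N Pmat Pmat_nonneg Hirr pi (fun i => flim i 1) Hpi_stat Hpi_nonneg
             Hpi_sum Hinv j Hj), Hsum.
  ring.
Qed.

Lemma flim_le_pi i x : (i < N)%nat -> 0 <= x <= 1 -> flim i x <= pi i.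
Proof. intros Hi Hx. rewrite <- flim_one; auto. apply flim_le; auto; lra. Qed.

(** * Left limits at [1] *)

(* [f] need not be left-continuous at [1]: [mass i <= pi i] a priori. *)
Definition mass i := seq_limit (fun k => flim i (toward1 k)).
Definition total_mass := fsum N mass.

Lemma mass_cv i : (i < N)%nat -> Un_cv (fun k => flim i (toward1 k)) (mass i).
Proof.
  intros Hi. apply seq_limit_spec.
  destruct (growing_cv (fun k => flim i (toward1 k))) as [l Hl]; [..|now exists l].
  - intros n. pose proof (toward1_range n). pose proof (toward1_range (S n)).
    apply flim_le; auto; [lra | apply toward1_le_S | lra].
  - exists (pi i). intros r [k ->]. pose proof (toward1_range k). apply flim_le_pi; auto; lra.
Qed.

Lemma mass_le_pi i : (i < N)%nat -> mass i <= pi i.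
Proof.
  intros Hi. apply (@Rle_cv_lim (fun k => flim i (toward1 k)) (fun _ => pi i));
    [|now apply mass_cv | apply cv_const].
  intros k. pose proof (toward1_range k). apply flim_le_pi; auto; lra.
Qed.

Lemma A_toward1_cv i j : (i < N)%nat -> (j < N)%nat ->
  Un_cv (fun k => A i j (toward1 k)) (Pmat i j).
Proof. intros. apply abel_limit; auto using toward1_range, toward1_cv, Pmat_spec. Qed.

Lemma Bgf_toward1_cv : Un_cv (fun k => Bgf (toward1 k)) 1.
Proof. apply abel_limit; auto using toward1_range, toward1_cv. Qed.

Lemma mass_invariant : invariant N Pmat mass.
Proof.
  intros j Hj. apply (UL_sequence (fun k => toward1 k * flim j (toward1 k))).
  - eapply cv_ext;
      [intros k; symmetry; apply flim_balance; auto; pose proof (toward1_range k); lra|].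
    replace (fsum N (fun i => mass i * Pmat i j))
      with (fsum N (fun i => Pmat i j * mass i) + (1 - 1) * fsum N (fun i => Pmat i j * flim i 0))
      by (rewrite Rminus_diag, Rmult_0_l, Rplus_0_r; apply fsum_ext; intros; ring).
    apply CV_plus; [|apply CV_mult; [apply CV_minus; [apply Bgf_toward1_cv | apply cv_const] |]];
      apply cv_fsum; intros i Hi; apply CV_mult; auto using A_toward1_cv, mass_cv, cv_const.
  - rewrite <- (Rmult_1_l (mass j)). apply CV_mult; auto using toward1_cv, mass_cv.
Qed.

Lemma mass_proportional i : (i < N)%nat -> mass i = total_mass * pi i.
Proof.
  intros Hi.
  assert (Hinv : invariant N Pmat (fun i => pi i - mass i)).
  { intros j Hj. rewrite (fsum_ext N _ (fun i => pi i * Pmat i j - mass i * Pmat i j)) by (intros; ring).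
    rewrite fsum_minus, mass_invariant; auto. unfold Pmat. now rewrite Hpi_stat. }
  pose proof (invariant_unique N Pmat Pmat_nonneg Hirr pi _ Hpi_stat Hpi_nonneg Hpi_sum Hinv i Hi).
  rewrite fsum_minus, Hpi_sum in H. fold total_mass in H. nra.
Qed.

(** * The first moment identity *)

Definition idle_limit := fsum N (fun i => flim i 0).

Lemma fsum_phases x g u v :
  (forall j, (j < N)%nat -> x * g j =
     fsum N (fun i => A i j x * u i) + (Bgf x - 1) * fsum N (fun i => A i j x * v i)) ->
  x * fsum N g = fsum N (fun i => A_row i x * u i) + (Bgf x - 1) * fsum N (fun i => A_row i x * v i).
Proof.
  intros H.
  assert (Hrow : forall w, fsum N (fun j => fsum N (fun i => A i j x * w i))
                           = fsum N (fun i => A_row i x * w i)).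
  { intros w. rewrite fsum_swap. apply fsum_ext. intros i _. unfold A_row. now rewrite fsum_scal_r. }
  rewrite <- fsum_scal_l, (fsum_ext N (fun j => x * g j) _ H), fsum_plus, fsum_scal_l, !Hrow.
  reflexivity.
Qed.

Lemma one_minus_A_row i x : (i < N)%nat -> 1 - A_row i x = fsum N (fun j => Pmat i j - A i j x).
Proof. intros Hi. rewrite fsum_minus. unfold Pmat. now rewrite Hstoch. Qed.

Lemma A_row_bounds i x : (i < N)%nat -> 0 <= x <= 1 ->
  0 <= A_row i x /\ 0 <= 1 - A_row i x <= (1 - x) * alpha_row i.
Proof.
  intros Hi Hx.
  assert (Hterm : forall j, (j < N)%nat -> 0 <= Pmat i j - A i j x <= (1 - x) * alpha i j)
    by (intros; apply rgf_chord_bound; auto using Pmat_spec, alpha_spec).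
  rewrite one_minus_A_row by auto. unfold alpha_row. rewrite <- fsum_scal_l.
  split; [|split]; [apply fsum_nonneg | apply fsum_nonneg | apply fsum_le]; intros j Hj;
    [apply rgf_nonneg; auto; lra | apply Hterm; auto ..].
Qed.

Lemma Bgf_bounds x : 0 <= x <= 1 -> 0 <= 1 - Bgf x <= (1 - x) * EB.
Proof. intros. apply (rgf_chord_bound b 1 EB x); auto using EB_spec. Qed.

Lemma A_row_slope_cv i : (i < N)%nat ->
  Un_cv (fun k => (1 - A_row i (toward1 k)) / (1 - toward1 k)) (alpha_row i).
Proof.
  intros Hi.
  apply cv_ext with (fun k => fsum N (fun j => (Pmat i j - A i j (toward1 k)) / (1 - toward1 k))).
  - intros k. rewrite one_minus_A_row by auto. unfold Rdiv. now rewrite fsum_scal_r.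
  - apply cv_fsum. intros j Hj.
    apply abel_slope_limit; auto using toward1_range, toward1_cv, Pmat_spec, alpha_spec.
Qed.

Lemma Bgf_slope_cv : Un_cv (fun k => (1 - Bgf (toward1 k)) / (1 - toward1 k)) EB.
Proof. apply abel_slope_limit; auto using toward1_range, toward1_cv, EB_spec. Qed.

Lemma A_row_toward1_cv i : (i < N)%nat -> Un_cv (fun k => A_row i (toward1 k)) 1.
Proof. intros Hi. rewrite <- (Hstoch i Hi). apply cv_fsum. intros; now apply A_toward1_cv. Qed.

Lemma flim_slope_identity x : 0 <= x < 1 ->
  fsum N (fun i => flim i x) =
  fsum N (fun i => flim i x * ((1 - A_row i x) / (1 - x)))
  + (1 - Bgf x) / (1 - x) * fsum N (fun i => A_row i x * flim i 0).
Proof.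
  intros Hx.
  pose proof (fsum_phases x (fun j => flim j x) (fun i => flim i x) (fun i => flim i 0)
                (fun j Hj => flim_balance j x Hj ltac:(lra))) as E.
  rewrite (fsum_ext N (fun i => flim i x * _) (fun i => (flim i x - A_row i x * flim i x) * / (1 - x)))
    by (intros; unfold Rdiv; ring).
  rewrite fsum_scal_r, fsum_minus.
  set (h := fsum N (fun i => flim i x)) in *. set (T := fsum N (fun i => A_row i x * flim i x)) in *.
  set (S2 := fsum N (fun i => A_row i x * flim i 0)) in *.
  replace T with (x * h - (Bgf x - 1) * S2) by lra. field. lra.
Qed.

Lemma total_mass_identity :
  total_mass = fsum N (fun i => mass i * alpha_row i) + EB * idle_limit.
Proof.
  apply (UL_sequence (fun k => fsum N (fun i => flim i (toward1 k)))).
  - apply cv_fsum. intros; now apply mass_cv.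
  - eapply cv_ext; [intros k; symmetry; apply flim_slope_identity, toward1_range|].
    apply CV_plus, CV_mult; [| apply Bgf_slope_cv |].
    + apply cv_fsum. intros i Hi. apply CV_mult; auto using mass_cv, A_row_slope_cv.
    + unfold idle_limit. rewrite (fsum_ext N (fun i => flim i 0) (fun i => 1 * flim i 0)) by (intros; ring).
      apply cv_fsum. intros i Hi. apply CV_mult; auto using A_row_toward1_cv, cv_const.
Qed.

(** * No loss of mass: the drift bound *)

Definition Fsum n x := fsum N (fun j => Fn n j x).
Definition idle_sum n := fsum N (idle n).
(* Upper bound for the expected increment [E[X_(n+1)] - E[X_n]]. *)
Definition drift n := -1 + fsum N (fun i => alpha_row i * phase n i) + EB * idle_sum n.

Lemma idle_nonneg n i : (i < N)%nat -> 0 <= idle n i.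
Proof. intros. now apply HL_nonneg. Qed.

Lemma Fsum_le1 n x : 0 <= x <= 1 -> Fsum n x <= 1.
Proof.
  intros Hx. rewrite <- (phase_sum n). apply fsum_le. intros j Hj.
  apply rgf_le; auto; lra.
Qed.

Lemma Fsum_O x : 0 <= x <= 1 -> 1 - Fsum O x <= INR x0 * (1 - x).
Proof.
  intros Hx.
  assert (HF : forall j, Fn O j x = x ^ x0 * q j).
  { intros j. apply rsum_eq. eapply infinite_sum_ext; [|apply (infinite_sum_indicator x0 (x ^ x0 * q j))].
    intros k. simpl. destruct (Nat.eqb_spec k x0) as [->|]; ring. }
  unfold Fsum. rewrite (fsum_ext N _ _ (fun j _ => HF j)), fsum_scal_l, Hq_sum, Rmult_1_r.
  now apply one_minus_pow_bounds.
Qed.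

Lemma Fsum_step n x : 0 <= x <= 1 ->
  Fsum n x - x * Fsum (S n) x <= (1 - x) * (fsum N (fun i => alpha_row i * phase n i) + EB * idle_sum n).
Proof.
  intros Hx.
  unfold Fsum at 2. rewrite (fsum_phases x _ (fun i => Fn n i x) (idle n))
    by (intros; now apply Fn_recursion).
  replace (Fsum n x - _)
    with (fsum N (fun i => (1 - A_row i x) * Fn n i x) + (1 - Bgf x) * fsum N (fun i => A_row i x * idle n i))
    by (unfold Fsum; rewrite (fsum_ext N (fun i => (1 - A_row i x) * Fn n i x)
                               (fun i => Fn n i x - A_row i x * Fn n i x)), fsum_minus by (intros; ring);
        ring).
  rewrite Rmult_plus_distr_l. apply Rplus_le_compat.
  - rewrite <- fsum_scal_l. apply fsum_le. intros i Hi.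
    pose proof (A_row_bounds i x Hi Hx). pose proof (rgf_nonneg (fun y => L n y i) x).
    assert (Fn n i x <= phase n i) by (apply rgf_le; auto; lra).
    assert (0 <= Fn n i x) by (apply rgf_nonneg; auto). nra.
  - assert (0 <= fsum N (fun i => A_row i x * idle n i) <= idle_sum n).
    { split; [apply fsum_nonneg | apply fsum_le]; intros i Hi;
        pose proof (A_row_bounds i x Hi Hx); pose proof (idle_nonneg n i Hi); nra. }
    pose proof (Bgf_bounds x Hx). nra.
Qed.

(* Telescoping [Fsum_step]: the deficit [1 - Fsum m x] tends to 0 as [x] tends to 1, while
   the accumulated drift cannot fall below [- x0]. *)
Lemma drift_sum_lower_x n x : 0 <= x < 1 ->
  - INR x0 <= fsum n drift + fsum n (fun m => 1 - Fsum (S m) x).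
Proof.
  intros Hx.
  assert (Htel : (1 - Fsum n x) - (1 - Fsum O x)
                 <= (1 - x) * (fsum n drift + fsum n (fun m => 1 - Fsum (S m) x))).
  { rewrite <- (fsum_telescope n (fun m => 1 - Fsum m x)), <- fsum_plus, <- fsum_scal_l.
    apply fsum_le. intros m _. pose proof (Fsum_step m x ltac:(lra)). unfold drift. nra. }
  pose proof (Fsum_O x ltac:(lra)). pose proof (Fsum_le1 n x ltac:(lra)).
  apply (Rmult_le_reg_l (1 - x)); lra.
Qed.

Lemma drift_sum_lower n : - INR x0 <= fsum n drift.
Proof.
  assert (C : Un_cv (fun k => fsum n (fun m => 1 - Fsum (S m) (toward1 k))) 0).
  { rewrite <- (fsum_const0 n). apply (cv_fsum n (fun m k => 1 - Fsum (S m) (toward1 k))).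
    intros m _. replace 0 with (1 - fsum N (phase (S m))) by (rewrite phase_sum; ring).
    apply CV_minus; [apply cv_const|]. apply cv_fsum. intros j Hj.
    apply abel_limit; auto using toward1_range, toward1_cv.
    apply infinite_sum_ext with (fun y => L (S m) y j * 1 ^ y);
      [intros; rewrite pow1; ring | apply infinite_sum_rgf; auto; lra]. }
  enough (- INR x0 - fsum n drift <= 0) by lra.
  apply (@Rle_cv_lim (fun _ => - INR x0 - fsum n drift) (fun k => fsum n (fun m => 1 - Fsum (S m) (toward1 k))));
    [|apply cv_const | exact C].
  intros k. pose proof (drift_sum_lower_x n (toward1 k) (toward1_range k)). lra.
Qed.

Lemma idle_cv i : (i < N)%nat -> Un_cv (fun n => idle n i) (flim i 0).
Proof.
  intros Hi. eapply cv_ext; [|apply (flim_spec i 0 Hi ltac:(lra))].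
  intros n. apply rgf_at_zero.
Qed.

Lemma drift_cv : Un_cv drift (-1 + rho + EB * idle_limit).
Proof.
  apply CV_plus; [apply CV_plus; [apply cv_const|] | apply cv_scal].
  - apply cv_fsum. intros i Hi. apply cv_scal. rewrite <- flim_one by auto. now apply phase_cv.
  - apply cv_fsum. intros; now apply idle_cv.
Qed.

Lemma drift_limit_nonneg : 0 <= -1 + rho + EB * idle_limit.
Proof.
  pose proof (cv_S _ _ (Cesaro_1 drift _ drift_cv)) as C.
  apply (@Rle_cv_lim (fun n => - INR x0 * / (INR n + 1)) (fun n => sum_f_R0 drift (Nat.pred (S n)) / INR (S n)));
    [| rewrite <- (Rmult_0_r (- INR x0)); apply cv_scal, cv_inv_INR_S | exact C].
  intros n. simpl (Nat.pred (S n)). rewrite <- fsum_sum_f_R0, S_INR.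
  pose proof (drift_sum_lower (S n)). pose proof (pos_INR n).
  apply Rmult_le_compat_r; [left; apply Rinv_0_lt_compat; lra | auto].
Qed.

Lemma EB_ge1 : 1 <= EB.
Proof.
  apply (infinite_sum_le b (fun k => INR k * b k)); auto using EB_spec.
  intros [|k]; [rewrite Hb0; simpl; lra|].
  rewrite S_INR. pose proof (pos_INR k). pose proof (Hb_nonneg (S k)). nra.
Qed.

Lemma idle_limit_value : rho < 1 -> idle_limit = (1 - rho) / EB.
Proof.
  intros Hrho. pose proof total_mass_identity as E. pose proof drift_limit_nonneg. pose proof EB_ge1.
  rewrite (fsum_ext N _ (fun i => total_mass * (alpha_row i * pi i))) in E
    by (intros; rewrite mass_proportional; auto; ring).
  rewrite fsum_scal_l in E. fold rho in E.
  assert (total_mass <= 1)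
    by (rewrite <- Hpi_sum; apply fsum_le; intros; now apply mass_le_pi).
  assert (Hmass : total_mass = 1) by nra.
  rewrite Hmass in E. replace (1 - rho) with (EB * idle_limit) by lra. field. lra.
Qed.

Lemma f_at_zero i : (i < N)%nat -> f Czero i = RtoC (flim i 0).
Proof. intros Hi. apply (flim_spec i 0 Hi). lra. Qed.

End Limits.

Theorem mainTheorem10
  (N : nat) (HN : (2 <= N)%nat)
  (a : nat -> nat -> nat -> R)
  (Ha_nonneg : forall i j k, 0 <= a i j k)
  (Ha_sum : forall i j, (i < N)%nat -> (j < N)%nat -> exists s, infinite_sum (a i j) s)
  (Hstoch : forall i, (i < N)%nat -> fsum N (fun j => rsum (a i j)) = 1)
  (Hirr : irreducible N (fun i j => rsum (a i j)))
  (pi : nat -> R)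
  (Hpi_nonneg : forall j, (j < N)%nat -> 0 <= pi j)
  (Hpi_sum : fsum N pi = 1)
  (Hpi_stat : forall j, (j < N)%nat ->
      fsum N (fun i => pi i * rsum (a i j)) = pi j)
  (Halpha : forall i j, (i < N)%nat -> (j < N)%nat ->
      exists s, infinite_sum (fun k => INR k * a i j k) s)
  (b : nat -> R)
  (Hb_nonneg : forall k, 0 <= b k)
  (Hb0 : b 0%nat = 0)
  (Hb_sum : infinite_sum b 1)
  (x0 : nat) (q : nat -> R)
  (Hq_nonneg : forall j, (j < N)%nat -> 0 <= q j)
  (Hq_sum : fsum N q = 1)
  (f : Cplx -> nat -> Cplx)
  (Hrho : fsum N (fun i => fsum N (fun j => pi i * rsum (fun k => INR k * a i j k))) < 1)
  (Hf : forall z, Cnorm z <= 1 -> forall j, (j < N)%nat ->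
      Ccv (fun n => gf (fun y => law N a b x0 q n y j) z) (f z j)) :
  (forall z, Cnorm z <= 1 -> forall j, (j < N)%nat ->
     Csub (Cmul (Csub z (gf (a j j) z)) (f z j))
          (Cfsum N (fun i => if Nat.eqb i j then Czero
                             else Cmul (gf (a i j) z) (f z i)))
     = Cmul (Csub (gf b z) Cone)
            (Cfsum N (fun i => Cmul (gf (a i j) z) (f Czero i))))
  /\
  ((exists s, infinite_sum (fun k => INR k * b k) s) ->
     Cfsum N (fun i => f Czero i)
     = RtoC ((1 - fsum N (fun i => fsum N (fun j => pi i * rsum (fun k => INR k * a i j k))))
             / rsum (fun k => INR k * b k))).
Proof.
  split.
  - intros z Hz j Hj.
    rewrite (Cfsum_skip N (fun i => Cmul (gf (a i j) z) (f z i))) by auto.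
    transitivity (Csub (Cmul z (f z j)) (Cfsum N (fun i => Cmul (gf (a i j) z) (f z i)))); [ring|].
    rewrite (balance_equation N a b x0 q f); auto; [ring | now exists 1].
  - intros HEB.
    assert (Erho : rho N a pi = fsum N (fun i => fsum N (fun j => pi i * rsum (fun k => INR k * a i j k)))).
    { apply fsum_ext. intros i _. unfold alpha_row. rewrite Rmult_comm, <- fsum_scal_l. reflexivity. }
    pose proof (idle_limit_value N a b x0 q f pi Ha_nonneg Ha_sum Hstoch Hirr Hpi_nonneg Hpi_sum
                  Hpi_stat Halpha Hb_nonneg Hb0 Hb_sum HEB Hq_nonneg Hq_sum Hf ltac:(lra)) as Hidle.
    rewrite (Cfsum_ext N _ (fun i => RtoC (flim f i 0))), Cfsum_RtoC
      by (intros; apply (f_at_zero N a b x0 q f); auto; now exists 1).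
    unfold idle_limit in Hidle. now rewrite Hidle, Erho.
Qed.
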